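(* Let $A$ be a semilattice of groups. The set $\mathrm{iend}\,A$ of relatively invertible endomorphisms of $A$ is an (inverse) subsemigroup of the monoid $\mathrm{End}\,A$ (under composition), and it is isomorphic to $\mathcal I_{ui}(A)$.
   Context: A semilattice of groups is an inverse semigroup $A$ whose idempotents are central. An endomorphism $\varphi$ of $A$ is relatively invertible if there exist $\bar\varphi\in\mathrm{End}\,A$ and $e_\varphi\in E(A)$ such that $\bar\varphi(\varphi(a))=e_\varphi a$ and $\varphi(\bar\varphi(a))=\varphi(e_\varphi)a$ for all $a\in A$, $e_\varphi$ is the identity of $\bar\varphi(A)$ and $\varphi(e_\varphi)$ is the identity of $\varphi(A)$. $\mathcal I_{ui}(A)$ denotes the inverse semigroup of all isomorphisms between unital ideals of $A$ (ideals of the form $eA$, $e\in E(A)$), with the usual composition of partial bijections. *)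

(** A semilattice of groups: an inverse semigroup whose idempotents are central. *)
Record SLG := {
  carrier :> Type;
  mul : carrier -> carrier -> carrier;
  mulA : forall a b c, mul a (mul b c) = mul (mul a b) c;
  inverse_unique : forall a, exists! b, mul (mul a b) a = a /\ mul (mul b a) b = b;
  idem_central : forall e a, mul e e = e -> mul e a = mul a e
}.

Arguments mul {s} _ _.

Definition idem {A : SLG} (e : A) : Prop := mul e e = e.

Definition is_end {A : SLG} (f : A -> A) : Prop :=
  forall a b, f (mul a b) = mul (f a) (f b).

Definition identity_of {A : SLG} (u : A) (S : A -> Prop) : Prop :=
  S u /\ forall x, S x -> mul u x = x /\ mul x u = x.

Definition image {A : SLG} (f : A -> A) : A -> Prop := fun x => exists a, f a = x.

Definition rel_invertible {A : SLG} (phi : A -> A) : Prop :=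
  is_end phi /\
  exists (phibar : A -> A) (e : A),
    is_end phibar /\ idem e /\
    (forall a, phibar (phi a) = mul e a) /\
    (forall a, phi (phibar a) = mul (phi e) a) /\
    identity_of e (image phibar) /\
    identity_of (phi e) (image phi).

Definition iend (A : SLG) : (A -> A) -> Prop := fun phi => rel_invertible phi.

Definition uideal {A : SLG} (e : A) : A -> Prop := fun x => exists y, x = mul e y.

(** Partial maps A -> A, and their usual composition (first alpha, then beta). *)
Definition pcomp {A : SLG} (beta alpha : A -> option A) : A -> option A :=
  fun x => match alpha x with Some y => beta y | None => None end.

Definition ui_iso {A : SLG} (alpha : A -> option A) : Prop :=
  exists e f : A, idem e /\ idem f /\
    (forall x, uideal e x -> exists y, alpha x = Some y) /\
    (forall x, ~ uideal e x -> alpha x = None) /\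
    (forall x y, alpha x = Some y -> uideal f y) /\
    (forall y, uideal f y -> exists x, alpha x = Some y) /\
    (forall x x' y, alpha x = Some y -> alpha x' = Some y -> x = x') /\
    (forall x x' y y', alpha x = Some y -> alpha x' = Some y' ->
        alpha (mul x x') = Some (mul y y')).

Definition Iui (A : SLG) : (A -> option A) -> Prop := fun alpha => ui_iso alpha.

From Stdlib Require Import Classical ClassicalEpsilon FunctionalExtensionality.

(* Relative inverses compose: if [phibar] inverts [phi] with idempotent [e1] and
   [psibar] inverts [psi] with idempotent [e2], then [psibar \o phibar] inverts
   [phi \o psi] with idempotent [psibar e1].  Moreover [phibar] is a semigroup
   inverse of [phi], and an idempotent of iend A is multiplication by an idempotent
   of A, so idempotents of iend A commute; a regular semigroup with commuting
   idempotents has unique inverses.  Restricting [phi] to [e A] gives an isomorphism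
   onto [phi(e) A] with inverse [phibar], which determines [phi] as
   [phi (e a) = phi a]; conversely an isomorphism [alpha : e A -> f A] is the
   restriction of the endomorphism [a |-> alpha (e a)]. *)

Lemma inverse_unique_of_idempotents_commute {X : Type} (S : (X -> X) -> Prop) :
  (forall f g, S f -> S g -> S (fun x => f (g x))) ->
  (forall f g, S f -> S g -> (forall x, f (f x) = f x) -> (forall x, g (g x) = g x) ->
     forall x, f (g x) = g (f x)) ->
  forall phi psi chi, S phi -> S psi -> S chi ->
  (forall x, phi (psi (phi x)) = phi x) -> (forall x, psi (phi (psi x)) = psi x) ->
  (forall x, phi (chi (phi x)) = phi x) -> (forall x, chi (phi (chi x)) = chi x) ->
  forall x, chi x = psi x.
Proof.
  intros Hcomp Hcomm phi psi chi Sphi Spsi Schi Hpsi1 Hpsi2 Hchi1 Hchi2 x.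
  (* chi = chi phi psi phi chi = psi phi chi phi chi = psi phi chi, and
     symmetrically psi = psi phi chi phi psi = psi phi psi phi chi = psi phi chi. *)
  assert (Hl : forall y, chi (phi (psi (phi y))) = psi (phi (chi (phi y)))).
  { apply (Hcomm (fun y => chi (phi y)) (fun y => psi (phi y)));
      try (apply Hcomp; assumption); intro y; rewrite ?Hchi2, ?Hpsi2; reflexivity. }
  assert (Hr : forall y, phi (chi (phi (psi y))) = phi (psi (phi (chi y)))).
  { apply (Hcomm (fun y => phi (chi y)) (fun y => phi (psi y)));
      try (apply Hcomp; assumption); intro y; rewrite ?Hchi1, ?Hpsi1; reflexivity. }
  transitivity (psi (phi (chi x))).
  - rewrite <- Hchi2 at 1. rewrite <- (Hpsi1 (chi x)) at 1. rewrite Hl, Hchi2.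
    reflexivity.
  - symmetry. rewrite <- Hpsi2 at 1. rewrite <- (Hchi1 (psi x)), Hr, Hpsi2.
    reflexivity.
Qed.

Section SemilatticeOfGroups.

Variable A : SLG.

Lemma idem_mul_comm (e a : A) : idem e -> mul e a = mul a e.
Proof. apply idem_central. Qed.

Lemma idem_eq (e f : A) : idem e -> mul e f = f -> mul f e = e -> e = f.
Proof.
  intros He Hef Hfe. rewrite <- Hfe, <- (idem_mul_comm e f He). exact Hef.
Qed.

Lemma idem_mul_distr_l (e a b : A) :
  idem e -> mul e (mul a b) = mul (mul e a) (mul e b).
Proof.
  intro He. rewrite <- (mulA _ e a (mul e b)), (mulA _ a e b).
  rewrite <- (idem_mul_comm e a He), <- mulA, (mulA _ e e), He. reflexivity.
Qed.

Lemma identity_of_central (u : A) (S : A -> Prop) :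
  idem u -> S u -> (forall x, S x -> mul u x = x) -> identity_of u S.
Proof.
  intros Hu Su Hid. split; [exact Su|].
  intros x Sx. split; [exact (Hid x Sx)|].
  rewrite <- (idem_mul_comm u x Hu). exact (Hid x Sx).
Qed.

Lemma uideal_mul_l (e x : A) : idem e -> uideal e x -> mul e x = x.
Proof. intros He [y ->]. rewrite mulA, He. reflexivity. Qed.

Lemma uideal_of_mul_l (e x : A) : mul e x = x -> uideal e x.
Proof. intro H. exists x. symmetry. exact H. Qed.

Lemma uideal_mul_r (e x y : A) : uideal e x -> uideal e (mul x y).
Proof. intros [z ->]. exists (mul z y). symmetry. apply mulA. Qed.

Lemma is_end_comp (phi psi : A -> A) :
  is_end phi -> is_end psi -> is_end (fun a => phi (psi a)).
Proof. intros Hphi Hpsi a b. rewrite Hpsi, Hphi. reflexivity. Qed.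

Lemma is_end_idem (phi : A -> A) (e : A) : is_end phi -> idem e -> idem (phi e).
Proof. intros Hphi He. unfold idem. rewrite <- Hphi, He. reflexivity. Qed.

Record rel_inverse (phi phibar : A -> A) (e : A) : Prop := RelInverse {
  rinv_end : is_end phibar;
  rinv_idem : idem e;
  rinv_cancel_l : forall a, phibar (phi a) = mul e a;
  rinv_cancel_r : forall a, phi (phibar a) = mul (phi e) a;
  rinv_identity_bar : identity_of e (image phibar);
  rinv_identity : identity_of (phi e) (image phi)
}.

Arguments rinv_end {phi phibar e}.
Arguments rinv_idem {phi phibar e}.
Arguments rinv_cancel_l {phi phibar e}.
Arguments rinv_cancel_r {phi phibar e}.
Arguments rinv_identity_bar {phi phibar e}.
Arguments rinv_identity {phi phibar e}.

Lemma iendP (phi : A -> A) :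
  iend A phi <-> is_end phi /\ exists phibar e, rel_inverse phi phibar e.
Proof.
  split.
  - intros [Hphi (phibar & e & H1 & H2 & H3 & H4 & H5 & H6)].
    split; [exact Hphi|]. exists phibar, e. constructor; assumption.
  - intros [Hphi (phibar & e & [H1 H2 H3 H4 H5 H6])].
    split; [exact Hphi|]. exists phibar, e. repeat (split; [assumption|]); assumption.
Qed.

Section RelInverse.

Context {phi phibar : A -> A} {e : A}.
Hypothesis Hphi : is_end phi.
Hypothesis Hinv : rel_inverse phi phibar e.

Lemma rinv_iend : iend A phi.
Proof. apply iendP. split; [exact Hphi|]. exists phibar, e. exact Hinv. Qed.

Lemma rinv_unit (a : A) : mul (phi e) (phi a) = phi a.
Proof. apply (rinv_identity Hinv). exists a. reflexivity. Qed.

Lemma rinv_unit_bar (a : A) : mul e (phibar a) = phibar a.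
Proof. apply (rinv_identity_bar Hinv). exists a. reflexivity. Qed.

Lemma rinv_absorb (a : A) : phi (mul e a) = phi a.
Proof. rewrite Hphi. apply rinv_unit. Qed.

Lemma rinv_idem_image : idem (phi e).
Proof. exact (is_end_idem phi e Hphi (rinv_idem Hinv)). Qed.

Lemma rinv_bar_idem : phibar (phi e) = e.
Proof. rewrite (rinv_cancel_l Hinv). exact (rinv_idem Hinv). Qed.

Lemma rinv_sym : rel_inverse phibar phi (phi e).
Proof.
  constructor.
  - exact Hphi.
  - exact rinv_idem_image.
  - exact (rinv_cancel_r Hinv).
  - intro a. rewrite rinv_bar_idem. apply (rinv_cancel_l Hinv).
  - exact (rinv_identity Hinv).
  - rewrite rinv_bar_idem. exact (rinv_identity_bar Hinv).
Qed.

Lemma rinv_regular (a : A) : phi (phibar (phi a)) = phi a.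
Proof. rewrite (rinv_cancel_l Hinv). apply rinv_absorb. Qed.

Lemma rinv_regular_bar (a : A) : phibar (phi (phibar a)) = phibar a.
Proof. rewrite (rinv_cancel_l Hinv). apply rinv_unit_bar. Qed.

End RelInverse.

Lemma rinv_iend_bar {phi phibar : A -> A} {e : A} :
  is_end phi -> rel_inverse phi phibar e -> iend A phibar.
Proof. intros Hphi Hinv. exact (rinv_iend (rinv_end Hinv) (rinv_sym Hphi Hinv)). Qed.

Lemma rinv_idem_unique {phi phibar phibar' : A -> A} {e e' : A} :
  is_end phi -> rel_inverse phi phibar e -> rel_inverse phi phibar' e' -> e' = e.
Proof.
  intros Hphi Hinv Hinv'.
  assert (Hphie : phi e' = phi e).
  { apply idem_eq.
    - exact (rinv_idem_image Hphi Hinv').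
    - exact (rinv_unit Hinv' e).
    - exact (rinv_unit Hinv e'). }
  assert (He : e = mul e e').
  { rewrite <- (rinv_bar_idem Hinv) at 1. rewrite <- Hphie. apply (rinv_cancel_l Hinv). }
  assert (He' : e' = mul e' e).
  { rewrite <- (rinv_bar_idem Hinv') at 1. rewrite Hphie. apply (rinv_cancel_l Hinv'). }
  apply idem_eq.
  - exact (rinv_idem Hinv').
  - rewrite <- (idem_mul_comm e e' (rinv_idem Hinv)). symmetry. exact He.
  - rewrite (idem_mul_comm e e' (rinv_idem Hinv)). symmetry. exact He'.
Qed.

Lemma rinv_comp {phi psi pb1 pb2 : A -> A} {e1 e2 : A} :
  is_end phi -> is_end psi -> rel_inverse phi pb1 e1 -> rel_inverse psi pb2 e2 ->
  rel_inverse (fun a => phi (psi a)) (fun a => pb2 (pb1 a)) (pb2 e1).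
Proof.
  intros Hphi Hpsi H1 H2.
  pose proof (rinv_end H1) as Hpb1. pose proof (rinv_end H2) as Hpb2.
  assert (Hidem : idem (pb2 e1)) by exact (is_end_idem pb2 e1 Hpb2 (rinv_idem H1)).
  assert (Hunit2 : mul (pb2 e1) e2 = pb2 e1).
  { rewrite <- (idem_mul_comm e2 _ (rinv_idem H2)). exact (rinv_unit_bar H2 e1). }
  assert (Hval : phi (psi (pb2 e1)) = mul (phi (psi e2)) (phi e1)).
  { rewrite (rinv_cancel_r H2), Hphi. reflexivity. }
  constructor.
  - exact (is_end_comp pb2 pb1 Hpb2 Hpb1).
  - exact Hidem.
  - intro a. rewrite (rinv_cancel_l H1), Hpb2, (rinv_cancel_l H2), mulA, Hunit2.
    reflexivity.
  - intro a. rewrite (rinv_cancel_r H2), Hphi, (rinv_cancel_r H1), Hval, mulA.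
    reflexivity.
  - apply identity_of_central; [exact Hidem| |].
    + exists (phi e1). rewrite (rinv_cancel_l H1), (rinv_idem H1). reflexivity.
    + intros x [a <-]. rewrite <- Hpb2, (rinv_unit_bar H1). reflexivity.
  - apply identity_of_central.
    + exact (is_end_idem _ _ (is_end_comp phi psi Hphi Hpsi) Hidem).
    + exists (pb2 e1). reflexivity.
    + intros x [a <-].
      rewrite Hval, <- mulA, (rinv_unit H1), <- Hphi, (rinv_unit H2). reflexivity.
Qed.

Lemma iend_comp (phi psi : A -> A) :
  iend A phi -> iend A psi -> iend A (fun a => phi (psi a)).
Proof.
  intros [Hphi (pb1 & e1 & H1)]%iendP [Hpsi (pb2 & e2 & H2)]%iendP.
  exact (rinv_iend (is_end_comp phi psi Hphi Hpsi) (rinv_comp Hphi Hpsi H1 H2)).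
Qed.

Lemma rinv_idempotent_eq {eps pb : A -> A} {e : A} :
  is_end eps -> rel_inverse eps pb e -> (forall a, eps (eps a) = eps a) ->
  forall a, eps a = mul e a.
Proof.
  intros Heps Hinv Hee.
  assert (Hproj : forall a, mul e (eps a) = mul e a).
  { intro a. rewrite <- (rinv_cancel_l Hinv), Hee. apply (rinv_cancel_l Hinv). }
  assert (Hpb : eps (pb e) = e).
  { rewrite (rinv_cancel_r Hinv), <- (idem_mul_comm e _ (rinv_idem Hinv)), Hproj.
    exact (rinv_idem Hinv). }
  assert (Hfix : eps e = e) by (rewrite <- Hpb at 1; rewrite Hee; exact Hpb).
  intro a. rewrite <- (rinv_unit Hinv a), Hfix. apply Hproj.
Qed.

Lemma iend_idempotents_commute (eps eps' : A -> A) :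
  iend A eps -> iend A eps' ->
  (forall a, eps (eps a) = eps a) -> (forall a, eps' (eps' a) = eps' a) ->
  forall a, eps (eps' a) = eps' (eps a).
Proof.
  intros [Heps (pb & e & H)]%iendP [Heps' (pb' & e' & H')]%iendP Hee Hee' a.
  rewrite !(rinv_idempotent_eq Heps H Hee), !(rinv_idempotent_eq Heps' H' Hee').
  rewrite !mulA, (idem_mul_comm e e' (rinv_idem H)). reflexivity.
Qed.

Lemma rinv_inverse_unique {phi phibar chi : A -> A} {e : A} :
  is_end phi -> rel_inverse phi phibar e -> iend A chi ->
  (forall a, phi (chi (phi a)) = phi a) -> (forall a, chi (phi (chi a)) = chi a) ->
  forall a, chi a = phibar a.
Proof.
  intros Hphi Hinv Hchi Hchi1 Hchi2.
  apply (inverse_unique_of_idempotents_commute (iend A) iend_comp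
           iend_idempotents_commute phi phibar chi); try assumption.
  - exact (rinv_iend Hphi Hinv).
  - exact (rinv_iend_bar Hphi Hinv).
  - exact (rinv_regular Hphi Hinv).
  - exact (rinv_regular_bar Hinv).
Qed.

Definition dom_idem (phi : A -> A) (e : A) : Prop :=
  exists phibar, rel_inverse phi phibar e.

(* Well defined: the idempotent of a relative inverse is unique
   ([rinv_idem_unique]). *)
Definition iend_to_Iui (phi : A -> A) : A -> option A := fun x =>
  if excluded_middle_informative (exists e, dom_idem phi e /\ uideal e x)
  then Some (phi x) else None.

Section IendToIui.

Context {phi phibar : A -> A} {e : A}.
Hypothesis Hphi : is_end phi.
Hypothesis Hinv : rel_inverse phi phibar e.

Lemma iend_to_Iui_in (x : A) : uideal e x -> iend_to_Iui phi x = Some (phi x).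
Proof.
  intro Hx. unfold iend_to_Iui.
  destruct excluded_middle_informative as [_|Hno]; [reflexivity|].
  exfalso. apply Hno. exists e. split; [exists phibar; exact Hinv | exact Hx].
Qed.

Lemma iend_to_Iui_out (x : A) : ~ uideal e x -> iend_to_Iui phi x = None.
Proof.
  intro Hx. unfold iend_to_Iui.
  destruct excluded_middle_informative as [(e' & [phibar' Hinv'] & Hx')|_];
    [|reflexivity].
  rewrite (rinv_idem_unique Hphi Hinv Hinv') in Hx'. contradiction.
Qed.

Lemma iend_to_Iui_Some (x y : A) :
  iend_to_Iui phi x = Some y -> uideal e x /\ y = phi x.
Proof.
  intro Hxy. destruct (classic (uideal e x)) as [Hx|Hx].
  - rewrite (iend_to_Iui_in x Hx) in Hxy. injection Hxy as <-. auto.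
  - rewrite (iend_to_Iui_out x Hx) in Hxy. discriminate.
Qed.

Lemma iend_to_Iui_ui_iso : ui_iso (iend_to_Iui phi).
Proof.
  pose proof (rinv_idem Hinv) as He.
  exists e, (phi e). split; [exact He|]. split; [exact (rinv_idem_image Hphi Hinv)|].
  split; [intros x Hx; eexists; exact (iend_to_Iui_in x Hx)|].
  split; [exact iend_to_Iui_out|].
  split.
  { intros x y [_ ->]%iend_to_Iui_Some. apply uideal_of_mul_l, (rinv_unit Hinv). }
  split.
  { intros y Hy. exists (phibar y).
    rewrite (iend_to_Iui_in _ (uideal_of_mul_l _ _ (rinv_unit_bar Hinv y))).
    rewrite (rinv_cancel_r Hinv), (uideal_mul_l _ _ (rinv_idem_image Hphi Hinv) Hy).
    reflexivity. }
  split.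
  { intros x x' y [Hx ->]%iend_to_Iui_Some [Hx' Hxx']%iend_to_Iui_Some.
    rewrite <- (uideal_mul_l e x He Hx), <- (uideal_mul_l e x' He Hx').
    rewrite <- !(rinv_cancel_l Hinv), Hxx'. reflexivity. }
  intros x x' y y' [Hx ->]%iend_to_Iui_Some [_ ->]%iend_to_Iui_Some.
  rewrite (iend_to_Iui_in _ (uideal_mul_r e x x' Hx)), Hphi. reflexivity.
Qed.

End IendToIui.

Lemma iend_to_Iui_inj (phi psi : A -> A) :
  iend A phi -> iend A psi -> iend_to_Iui phi = iend_to_Iui psi -> phi = psi.
Proof.
  intros [Hphi (pb & e & H)]%iendP [Hpsi (pb' & e' & H')]%iendP Heq.
  pose proof (rinv_idem H) as He. pose proof (rinv_idem H') as He'.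
  assert (Hee' : uideal e' e).
  { apply (iend_to_Iui_Some Hpsi H' e (phi e)).
    rewrite <- Heq. exact (iend_to_Iui_in H e (uideal_of_mul_l _ _ He)). }
  assert (He'e : uideal e e').
  { apply (iend_to_Iui_Some Hphi H e' (psi e')).
    rewrite Heq. exact (iend_to_Iui_in H' e' (uideal_of_mul_l _ _ He')). }
  assert (Hidem : e = e').
  { apply idem_eq; [exact He | exact (uideal_mul_l _ _ He He'e)
                   | exact (uideal_mul_l _ _ He' Hee')]. }
  subst e'.
  apply functional_extensionality. intro a.
  rewrite <- (rinv_absorb Hphi H), <- (rinv_absorb Hpsi H').
  assert (Hea : uideal e (mul e a)) by (exists a; reflexivity).
  pose proof (iend_to_Iui_in H _ Hea) as Hl.
  rewrite Heq, (iend_to_Iui_in H' _ Hea) in Hl. injection Hl as ->. reflexivity.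
Qed.

Lemma rinv_comp_dom {psi pb : A -> A} {e1 e2 : A} (x : A) :
  is_end psi -> rel_inverse psi pb e2 -> idem e1 -> uideal e2 x ->
  uideal (pb e1) x <-> uideal e1 (psi x).
Proof.
  intros Hpsi H He1 Hx. split.
  - intros [y ->]. exists (mul (psi e2) (psi y)).
    rewrite Hpsi, (rinv_cancel_r H), <- (idem_mul_comm e1 _ He1), mulA.
    reflexivity.
  - intros [z Hz]. exists (pb z).
    rewrite <- (rinv_end H), <- Hz, (rinv_cancel_l H).
    symmetry. exact (uideal_mul_l _ _ (rinv_idem H) Hx).
Qed.

Lemma iend_to_Iui_comp (phi psi : A -> A) :
  iend A phi -> iend A psi ->
  iend_to_Iui (fun a => phi (psi a)) = pcomp (iend_to_Iui phi) (iend_to_Iui psi).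
Proof.
  intros [Hphi (pb1 & e1 & H1)]%iendP [Hpsi (pb2 & e2 & H2)]%iendP.
  pose proof (rinv_comp Hphi Hpsi H1 H2) as H.
  pose proof (is_end_comp phi psi Hphi Hpsi) as Hend.
  apply functional_extensionality. intro x. unfold pcomp.
  destruct (classic (uideal e2 x)) as [Hx2|Hx2].
  - rewrite (iend_to_Iui_in H2 x Hx2).
    destruct (classic (uideal (pb2 e1) x)) as [Hx|Hx].
    + rewrite (iend_to_Iui_in H x Hx), (iend_to_Iui_in H1 (psi x)); [reflexivity|].
      exact (proj1 (rinv_comp_dom x Hpsi H2 (rinv_idem H1) Hx2) Hx).
    + rewrite (iend_to_Iui_out Hend H x Hx), (iend_to_Iui_out Hphi H1 (psi x));
        [reflexivity|].
      rewrite <- (rinv_comp_dom x Hpsi H2 (rinv_idem H1) Hx2). exact Hx.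
  - rewrite (iend_to_Iui_out Hpsi H2 x Hx2), (iend_to_Iui_out Hend H x); [reflexivity|].
    intros [y ->]. apply Hx2. exists (mul (pb2 e1) y).
    rewrite mulA, (rinv_unit_bar H2). reflexivity.
Qed.

Section UnitalIdealIso.

Variables (alpha : A -> option A) (e f : A).
Hypothesis He : idem e.
Hypothesis Hf : idem f.
Hypothesis Hdom : forall x, uideal e x -> exists y, alpha x = Some y.
Hypothesis Hnone : forall x, ~ uideal e x -> alpha x = None.
Hypothesis Himg : forall x y, alpha x = Some y -> uideal f y.
Hypothesis Hsurj : forall y, uideal f y -> exists x, alpha x = Some y.
Hypothesis Hinj : forall x x' y, alpha x = Some y -> alpha x' = Some y -> x = x'.
Hypothesis Hhom : forall x x' y y', alpha x = Some y -> alpha x' = Some y' ->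
  alpha (mul x x') = Some (mul y y').

(* The default branch is never taken, since [e a] lies in the domain of [alpha]. *)
Definition iso_ext (a : A) : A :=
  match alpha (mul e a) with Some y => y | None => a end.

Definition iso_ext_inv (a : A) : A :=
  epsilon (inhabits a) (fun x => alpha x = Some (mul f a)).

Lemma alpha_Some_uideal (x y : A) : alpha x = Some y -> uideal e x.
Proof.
  intro Hxy. apply NNPP. intro Hx. rewrite (Hnone x Hx) in Hxy. discriminate.
Qed.

Lemma alpha_iso_ext (a : A) : alpha (mul e a) = Some (iso_ext a).
Proof.
  unfold iso_ext. destruct (Hdom (mul e a)) as [y ->]; [exists a|]; reflexivity.
Qed.

Lemma alpha_iso_ext_inv (a : A) : alpha (iso_ext_inv a) = Some (mul f a).
Proof.
  apply (epsilon_spec (inhabits a) (fun x => alpha x = Some (mul f a))), Hsurj.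
  exists a. reflexivity.
Qed.

Lemma alpha_idem : alpha e = Some f.
Proof.
  destruct (Hdom e) as [g Hg]; [exact (uideal_of_mul_l _ _ He)|].
  rewrite Hg. f_equal.
  assert (Hg_idem : idem g).
  { pose proof (Hhom _ _ _ _ Hg Hg) as Hgg. rewrite He, Hg in Hgg.
    congruence. }
  assert (Hg_unit : forall y, uideal f y -> mul g y = y).
  { intros y Hy. destruct (Hsurj y Hy) as [x Hx].
    pose proof (Hhom _ _ _ _ Hg Hx) as Hgx.
    rewrite (uideal_mul_l _ _ He (alpha_Some_uideal _ _ Hx)), Hx in Hgx.
    congruence. }
  apply idem_eq; [exact Hg_idem | exact (Hg_unit f (uideal_of_mul_l _ _ Hf)) |].
  exact (uideal_mul_l _ _ Hf (Himg _ _ Hg)).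
Qed.

Lemma iso_ext_e : iso_ext e = f.
Proof.
  pose proof (alpha_iso_ext e) as Hext. rewrite He, alpha_idem in Hext.
  congruence.
Qed.

Lemma iso_ext_end : is_end iso_ext.
Proof.
  intros a b. pose proof (alpha_iso_ext (mul a b)) as Hab.
  rewrite (idem_mul_distr_l _ _ _ He), (Hhom _ _ _ _ (alpha_iso_ext a) (alpha_iso_ext b))
    in Hab.
  congruence.
Qed.

Lemma iso_ext_uideal (a : A) : uideal f (iso_ext a).
Proof. exact (Himg _ _ (alpha_iso_ext a)). Qed.

Lemma iso_ext_inv_uideal (a : A) : uideal e (iso_ext_inv a).
Proof. exact (alpha_Some_uideal _ _ (alpha_iso_ext_inv a)). Qed.

Lemma iso_ext_rel_inverse : rel_inverse iso_ext iso_ext_inv e.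
Proof.
  constructor.
  - intros a b. apply (Hinj _ _ (mul f (mul a b))); [apply alpha_iso_ext_inv|].
    rewrite (Hhom _ _ _ _ (alpha_iso_ext_inv a) (alpha_iso_ext_inv b)).
    rewrite (idem_mul_distr_l _ _ _ Hf). reflexivity.
  - exact He.
  - intro a. apply (Hinj _ _ (iso_ext a)); [|apply alpha_iso_ext].
    rewrite alpha_iso_ext_inv, (uideal_mul_l _ _ Hf (iso_ext_uideal a)). reflexivity.
  - intro a. pose proof (alpha_iso_ext (iso_ext_inv a)) as Hext.
    rewrite (uideal_mul_l _ _ He (iso_ext_inv_uideal a)), alpha_iso_ext_inv in Hext.
    rewrite iso_ext_e. injection Hext as ->. reflexivity.
  - apply identity_of_central; [exact He| |].
    + exists f. apply (Hinj _ _ f); [|exact alpha_idem].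
      rewrite alpha_iso_ext_inv, Hf. reflexivity.
    + intros x [a <-]. exact (uideal_mul_l _ _ He (iso_ext_inv_uideal a)).
  - rewrite iso_ext_e. apply identity_of_central; [exact Hf| |].
    + exists e. exact iso_ext_e.
    + intros x [a <-]. exact (uideal_mul_l _ _ Hf (iso_ext_uideal a)).
Qed.

Lemma iend_to_Iui_iso_ext : iend_to_Iui iso_ext = alpha.
Proof.
  apply functional_extensionality. intro x.
  destruct (classic (uideal e x)) as [Hx|Hx].
  - rewrite (iend_to_Iui_in iso_ext_rel_inverse x Hx), <- alpha_iso_ext.
    rewrite (uideal_mul_l _ _ He Hx). reflexivity.
  - rewrite (iend_to_Iui_out iso_ext_end iso_ext_rel_inverse x Hx), Hnone; auto.
Qed.

End UnitalIdealIso.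

Lemma iend_to_Iui_surj (alpha : A -> option A) :
  Iui A alpha -> exists phi, iend A phi /\ iend_to_Iui phi = alpha.
Proof.
  intros (e & f & He & Hf & Hdom & Hnone & Himg & Hsurj & Hinj & Hhom).
  exists (iso_ext alpha e).
  pose proof (iso_ext_end alpha e He Hdom Hhom) as Hend.
  pose proof (iso_ext_rel_inverse alpha e f He Hf Hdom Hnone Himg Hsurj Hinj Hhom)
    as Hinv.
  split; [exact (rinv_iend Hend Hinv)|].
  exact (iend_to_Iui_iso_ext alpha e f He Hf Hdom Hnone Himg Hsurj Hinj Hhom).
Qed.

End SemilatticeOfGroups.


Theorem proposition3p4 (A : SLG) :
  (* iend A is closed under composition: a subsemigroup of End A *)
  (forall phi psi : A -> A, iend A phi -> iend A psi ->
     iend A (fun a => phi (psi a))) /\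
  (* and it is an inverse semigroup: unique inverses inside iend A *)
  (forall phi : A -> A, iend A phi ->
     exists psi : A -> A, iend A psi /\
       (fun a => phi (psi (phi a))) = phi /\
       (fun a => psi (phi (psi a))) = psi /\
       (forall chi : A -> A, iend A chi ->
          (fun a => phi (chi (phi a))) = phi ->
          (fun a => chi (phi (chi a))) = chi -> chi = psi)) /\
  (* iend A is isomorphic to I_ui(A) *)
  (exists Phi : (A -> A) -> (A -> option A),
     (forall phi, iend A phi -> Iui A (Phi phi)) /\
     (forall phi psi, iend A phi -> iend A psi -> Phi phi = Phi psi -> phi = psi) /\
     (forall alpha, Iui A alpha -> exists phi, iend A phi /\ Phi phi = alpha) /\
     (forall phi psi, iend A phi -> iend A psi ->
        Phi (fun a => phi (psi a)) = pcomp (Phi phi) (Phi psi))).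
Proof.
  split; [exact (iend_comp A)|].
  split.
  - intros phi [Hphi (phibar & e & Hinv)]%iendP.
    exists phibar. split; [exact (rinv_iend_bar A Hphi Hinv)|].
    split; [apply functional_extensionality, (rinv_regular A Hphi Hinv)|].
    split; [apply functional_extensionality, (rinv_regular_bar A Hinv)|].
    intros chi Hchi Hchi1 Hchi2. apply functional_extensionality.
    exact (rinv_inverse_unique A Hphi Hinv Hchi (equal_f Hchi1) (equal_f Hchi2)).
  - exists (iend_to_Iui A).
    split; [intros phi [Hphi (phibar & e & Hinv)]%iendP;
            exact (iend_to_Iui_ui_iso A Hphi Hinv)|].
    split; [exact (iend_to_Iui_inj A)|].
    split; [exact (iend_to_Iui_surj A)|].
    exact (iend_to_Iui_comp A).
Qed.
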